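(* Let $f:X\to\mathcal G$ be a function and $x_0\in\operatorname{dom} f$. The following are equivalent: (a) $f(x_0)=\inf f[X]$; (b) $\varphi_{f,z^*}(x_0)\le\varphi_{f,z^*}(x)$ for all $x\in X$, $z^*\in C^-\setminus\{0\}$; (c) $\varphi_{f,z^*}(x_0)\ominus\varphi_{f,z^*}(x)\le0$ for all $x\in X$, $z^*\in C^-\setminus\{0\}$; (d) $0\in f(x_0)\ominus f(x)$ for all $x\in X$; (e) for all $x\in X$, $z^*\in C^-\setminus\{0\}$: $\varphi_{f,z^*}(x_0)=-\infty$ or $0\le\varphi_{f,z^*}(x)\ominus\varphi_{f,z^*}(x_0)$. Each of these conditions implies (f): $0^+f(x_0)\supseteq f(x)\ominus f(x_0)$ for all $x\in X$.
   Context: $X$ real linear space, $Z$ real locally convex Hausdorff space with dual $Z^*$, $C\subseteq Z$ closed convex cone, $0\in C$, $C^-=\{z^*:z^*(c)\le0\ \forall c\in C\}$, $C^-\setminus\{0\}\ne\emptyset$. $\mathcal G=\{A\subseteq Z:A=\operatorname{cl}\operatorname{co}(A+C)\}$; $A\ominus B=\{z\in Z:B+\{z\}\subseteq A\}$; $0^+A=\{z:A+\{z\}\subseteq A\}$ for $A\ne\emptyset$, $0^+\emptyset=\emptyset$. $\operatorname{dom}f=\{x:f(x)\ne\emptyset\}$, $\inf f[X]=\operatorname{cl}\operatorname{co}\bigcup_{x\in X}f(x)$. On $\overline{\mathbb R}$: inf-addition $\dot+$ ($(-\infty)\dot+(+\infty)=+\infty$), $r\ominus s=\inf\{t\in\mathbb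 R:r\le s\dot+t\}$ ($\inf\emptyset=+\infty$). $\varphi_{f,z^*}(x)=\inf\{-z^*(z):z\in f(x)\}$ ($+\infty$ if $f(x)=\emptyset$). *)

From HB Require Import structures.
From mathcomp Require Import all_boot all_order all_algebra.
From mathcomp Require Import all_classical all_reals.
From mathcomp Require Import topology tvs ereal.

Set Implicit Arguments.
Unset Strict Implicit.
Unset Printing Implicit Defensive.

Import Order.TTheory GRing.Theory Num.Theory.
Import numFieldTopology.Exports.
Local Open Scope classical_set_scope.
Local Open Scope ring_scope.

Section SetValued.
Variables (R : realType) (Z : tvsType R).

Definition convex (A : set Z) : Prop :=
  forall x y (t : R), A x -> A y -> 0 <= t -> t <= 1 -> A (t *: x + (1 - t) *: y).

Definition convex_cone (C : set Z) : Prop :=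
  C 0 /\ convex C /\ (forall (t : R) c, 0 <= t -> C c -> C (t *: c)).

Definition co (A : set Z) : set Z :=
  \bigcap_(B in [set B : set Z | A `<=` B /\ convex B]) B.

Definition msum (A B : set Z) : set Z := [set a + b | a in A & b in B].

Definition is_dual (zs : Z -> R) : Prop :=
  (forall (a : R) (u v : Z), zs (a *: u + v) = a * zs u + zs v) /\ continuous zs.

Definition neg_polar (C : set Z) : set (Z -> R) :=
  [set zs | is_dual zs /\ forall c, C c -> zs c <= 0].

Definition neg_polar0 (C : set Z) : set (Z -> R) :=
  [set zs | neg_polar C zs /\ zs <> (fun _ => 0)].

Definition GG (C : set Z) : set (set Z) :=
  [set A | A = closure (co (msum A C))].

Definition mdiff (A B : set Z) : set Z :=
  [set z | forall b, B b -> A (b + z)].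

(* recession cone; empty for the empty set *)
Definition recc (A : set Z) : set Z :=
  [set z | A !=set0 /\ forall a, A a -> A (a + z)].

Definition dom (X : Type) (f : X -> set Z) : set X := [set x | f x <> set0].

Definition inf_img (X : Type) (f : X -> set Z) : set Z :=
  closure (co (\bigcup_(x in [set: X]) f x)).

(* scalarization phi_{f,z*}(x) = inf { - z*(z) | z in f x }, +oo if empty *)
Definition phi (X : Type) (f : X -> set Z) (zs : Z -> R) (x : X) : \bar R :=
  ereal_inf [set ((- zs z)%R)%:E | z in f x].

End SetValued.

(* inf-difference on extended reals: r -. s = inf {t in R | r <= s +' t},
   where +' is the inf-addition ((-oo) +' (+oo) = +oo), inf set0 = +oo *)
Definition ediff (R : realType) (r s : \bar R) : \bar R :=
  ereal_inf [set t%:E | t in [set t : R | (r <= dual_adde s t%:E)%E]].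

From HB Require Import structures.
From mathcomp Require Import all_boot all_order all_algebra.
From mathcomp Require Import all_classical all_reals.
From mathcomp Require Import topology tvs ereal normedtype.
From mathcomp Require Import ring lra.

(* Every f x is closed, convex and stable under adding C, so f x0 = inf f[X] exactly when
   f x is contained in f x0 for all x; this is (d), and it gives (f) because
   f x0 + z <= f x <= f x0 for z in f x -. f x0.  Inclusion gives (b) at once.  Conversely,
   a point of f x outside f x0 is strictly separated from the closed convex set f x0 by a
   continuous linear l; as f x0 + C <= f x0, l is nonpositive on C, and
   phi_l(x) < phi_l(x0) contradicts (b).  Since phi(x0) < +oo, (c) and (e) are (b) read
   through the inf-difference of extended reals.  The separation comes from extending,
   by Zorn's lemma, partial linear forms bounded by 1 on a convex neighbourhood of 0. *)

Set Implicit Arguments.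
Unset Strict Implicit.
Unset Printing Implicit Defensive.

Import Order.TTheory GRing.Theory Num.Theory.
Import numFieldTopology.Exports numFieldNormedType.Exports.

Local Open Scope classical_set_scope.
Local Open Scope ring_scope.

Lemma linear_form_basics (R : numDomainType) (E : lmodType R) (l : E -> R) :
  linear_for *%R l ->
  [/\ l 0 = 0, (forall k u, l (k *: u) = k * l u), (forall u v, l (u + v) = l u + l v)
    & (forall u, l (- u) = - l u)].
Proof.
move=> ll.
have l0 : l 0 = 0.
  by have := ll 1 0 0; rewrite scale1r addr0 mul1r => h; apply: (addrI (l 0)); rewrite addr0 -h.
have lZ k u : l (k *: u) = k * l u by have := ll k u 0; rewrite !addr0 l0 addr0.
split => // [u v|u]; first by have := ll 1 u v; rewrite scale1r mul1r.
by rewrite -scaleN1r lZ mulN1r.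
Qed.

Section algebraic_separation.
Variables (R : realType) (E : lmodType R) (W : set E) (d0 : E).
Hypothesis W_convex :
  forall x y (t : R), W x -> W y -> 0 <= t -> t <= 1 -> W (t *: x + (1 - t) *: y).
Hypothesis W0 : W 0.
Hypothesis W_absorbing : forall y, exists2 s : R, 0 < s & W (s *: y).
Hypothesis W_d0 : ~ W d0.

(* Graph of a linear form on a subspace containing d0, sending d0 to 1 and bounded by 1 on W. *)
Definition dominated_graph (G : set (E * R)) :=
  [/\ (forall x a b, G (x, a) -> G (x, b) -> a = b),
      (forall x a y b t, G (x, a) -> G (y, b) -> G (t *: x + y, t * a + b)),
      G (d0, 1) & (forall x a, G (x, a) -> W x -> a <= 1)].

Lemma dominated_graph0 G : dominated_graph G -> G (0, 0).
Proof.
case=> _ lin G1 _; have := lin _ _ _ _ (-1) G1 G1.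
by rewrite scaleN1r addNr mulN1r addNr.
Qed.

Definition line_graph : set (E * R) := [set p | exists t : R, p = (t *: d0, t)].

Lemma dominated_line_graph : dominated_graph line_graph.
Proof.
have d0_neq0 : d0 != 0 by apply: contra_notN W_d0 => /eqP ->.
split.
- move=> x a b [t [-> ->]] [s [e ->]]; apply/eqP; rewrite -subr_eq0.
  have /eqP : (t - s) *: d0 = 0 by rewrite scalerBl e subrr.
  by rewrite scaler_eq0 (negbTE d0_neq0) orbF.
- move=> x a y b t [u [-> ->]] [v [-> ->]]; exists (t * u + v).
  by rewrite scalerDl scalerA.
- by exists 1; rewrite scale1r.
- move=> x a [t [-> ->]] Wx; rewrite leNgt; apply/negP => t1; apply: W_d0.
  have t0 : 0 < t by apply: lt_trans t1.
  have := @W_convex _ _ t^-1 Wx W0 (ltW (eqbRL (invr_gt0 _) t0)).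
  rewrite scaler0 addr0 scalerA mulVf ?gt_eqF // scale1r; apply.
  by rewrite invf_le1 // ltW.
Qed.

Section one_step_extension.
Variables (A : set (E * R)) (y : E).
Hypothesis A_dominated : dominated_graph A.
Hypothesis y_notin : ~ (exists a, A (y, a)).

(* Extending to y with value c keeps the bound iff sup L <= c <= inf U;
   convexity of W gives L <= U. *)
Let L := [set v : R | exists m a s,
  [/\ A (m, a), 0 < s, W (m - s *: y) & v = (a - 1) / s]].
Let U := [set v : R | exists m a s,
  [/\ A (m, a), 0 < s, W (m + s *: y) & v = (1 - a) / s]].

Let L_le_U l u : L l -> U u -> l <= u.
Proof.
case: A_dominated => _ lin _ bA.
move=> [m2 [a2 [s2 [A2 s2p W2 ->]]]] [m1 [a1 [s1 [A1 s1p W1 ->]]]].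
have sp : 0 < s1 + s2 by rewrite addr_gt0.
pose t := s1 / (s1 + s2).
have t0 : 0 <= t by rewrite divr_ge0 // ltW.
have t1 : t <= 1 by rewrite ler_pdivrMr // mul1r lerDl ltW.
have ts : (1 - t) * s1 = t * s2 by rewrite /t; field; rewrite gt_eqF.
have := @W_convex _ _ t W2 W1 t0 t1.
have -> : t *: (m2 - s2 *: y) + (1 - t) *: (m1 + s1 *: y) = t *: m2 + ((1 - t) *: m1 + 0).
  by rewrite addr0 scalerBr scalerDr !scalerA ts [_ *: m1 + _]addrC addrA subrK.
have Am1 : A ((1 - t) *: m1 + 0, (1 - t) * a1 + 0).
  by apply: lin => //; exact: dominated_graph0.
move/(bA _ _ (lin _ _ _ _ t A2 Am1)).
have -> : t * a2 + ((1 - t) * a1 + 0) = (s1 * a2 + s2 * a1) / (s1 + s2).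
  by rewrite /t; field; rewrite gt_eqF.
rewrite ler_pdivrMr // mul1r => h.
rewrite ler_pdivrMr // mulrAC ler_pdivlMr //; nra.
Qed.

Let L_neq0 : L !=set0.
Proof.
have [s s0 Ws] := W_absorbing (- y).
exists ((0 - 1) / s), 0, 0, s; split => //; first exact: dominated_graph0.
by rewrite sub0r -scalerN.
Qed.

Let U_neq0 : U !=set0.
Proof.
have [s s0 Ws] := W_absorbing y.
exists ((1 - 0) / s), 0, 0, s; split => //; first exact: dominated_graph0.
by rewrite add0r.
Qed.

Let c := sup L.

Let L_le_c l : L l -> l <= c.
Proof.
apply: sup_upper_bound; split => //.
by case: U_neq0 => u Uu; exists u => l' Ll'; exact: L_le_U.
Qed.

Let c_le_U u : U u -> c <= u.
Proof. by move=> Uu; apply: ge_sup => // l Ll; exact: L_le_U. Qed.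

Let B := [set p : E * R | exists m a s, A (m, a) /\ p = (m + s *: y, a + s * c)].

Let B_functional x a b : B (x, a) -> B (x, b) -> a = b.
Proof.
case: A_dominated => fA lin _ _.
move=> [m1 [a1 [s1 [A1 [-> ->]]]]] [m2 [a2 [s2 [A2 [e ->]]]]].
have [es|ne] := eqVneq s1 s2.
  by move: e; rewrite es => /addIr e; rewrite e in A1; rewrite (fA _ _ _ A1 A2).
exfalso; apply: y_notin.
have e' : (s1 - s2) *: y = m2 - m1.
  by rewrite scalerBl; apply: (addrI m1); rewrite addrA e addrK [m1 + _]addrC subrK.
have := lin _ _ _ _ (s1 - s2)^-1 (lin _ _ _ _ (-1) A1 A2) (dominated_graph0 A_dominated).
rewrite addr0 scaleN1r [- m1 + _]addrC -e' scalerA mulVf ?scale1r ?subr_eq0 //.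
by move=> Ay; exists ((s1 - s2)^-1 * (-1 * a1 + a2) + 0).
Qed.

Let B_dominated : dominated_graph B.
Proof.
case: A_dominated => _ lin A1 bA; split.
- exact: B_functional.
- move=> x a x' b t [m1 [a1 [s1 [A1' [-> ->]]]]] [m2 [a2 [s2 [A2' [-> ->]]]]].
  exists (t *: m1 + m2), (t * a1 + a2), (t * s1 + s2); split; first exact: lin.
  congr pair; last by ring.
  by rewrite scalerDr scalerDl !scalerA -!addrA; congr (_ + _); rewrite addrCA.
- by exists d0, 1, 0; rewrite scale0r mul0r !addr0.
- move=> x a [m [a' [s [Am [-> ->]]]]].
  have [s0|s0|->] := ltgtP s 0 => Wx.
  + have Ll : L ((a' - 1) / (- s)).
      exists m, a', (- s); split => //; first by rewrite oppr_gt0.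
      by rewrite scaleNr opprK.
    have := L_le_c Ll; rewrite ler_pdivrMr ?oppr_gt0 //; nra.
  + have := c_le_U (ex_intro _ m (ex_intro _ a' (ex_intro _ s (And4 Am s0 Wx erefl)))).
    rewrite ler_pdivlMr //; nra.
  + by rewrite mul0r addr0; apply: bA Am _; rewrite scale0r addr0 in Wx.
Qed.

Lemma dominated_graph_extend : exists B, dominated_graph B /\ A `<` B.
Proof.
exists B; split => //; split.
- by move=> [x a] Ax; exists x, a, 0; rewrite scale0r mul0r !addr0.
- move=> BA; apply: y_notin; exists c; apply: BA.
  exists 0, 0, 1; split; first exact: dominated_graph0.
  by rewrite scale1r add0r mul1r add0r.
Qed.

End one_step_extension.

Lemma dominated_graph_chain (F : set (set (E * R))) :
  F `<=` [set G | G = set0 \/ dominated_graph G] -> total_on F subset ->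
  \bigcup_(G in F) G = set0 \/ dominated_graph (\bigcup_(G in F) G).
Proof.
move=> FP tot.
have [[G [FG [p Gp]]]|nG] := pselect (exists G, F G /\ G !=set0); last first.
  left; apply/seteqP; split => // p [G FG Gp]; apply: nG.
  by exists G; split => //; exists p.
have dominated_in G' p' : F G' -> G' p' -> dominated_graph G'.
  by move=> FG' G'p'; case: (FP _ FG') => // G'0; rewrite G'0 in G'p'.
have common G1 G2 p1 p2 : F G1 -> F G2 -> G1 p1 -> G2 p2 ->
    exists2 G3, F G3 /\ dominated_graph G3 & G3 p1 /\ G3 p2.
  move=> F1 F2 G1p G2p; have [s12|s21] := tot _ _ F1 F2.
  - by exists G2; split => //; [exact: dominated_in F2 G2p | exact: s12].
  - by exists G1; split => //; [exact: dominated_in F1 G1p | exact: s21].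
right; split.
- move=> x a b [G1 F1 G1p] [G2 F2 G2p].
  have [G3 [_ [fG3 _ _ _]] [h1 h2]] := common _ _ _ _ F1 F2 G1p G2p.
  exact: fG3 h1 h2.
- move=> x a x' b t [G1 F1 G1p] [G2 F2 G2p].
  have [G3 [F3 [_ lG3 _ _]] [h1 h2]] := common _ _ _ _ F1 F2 G1p G2p.
  by exists G3 => //; exact: lG3.
- by case: (dominated_in _ _ FG Gp) => _ _ G1 _; exists G.
- move=> x a [G1 F1 G1p] Wx.
  by case: (dominated_in _ _ F1 G1p) => _ _ _ bG1; exact: bG1 G1p Wx.
Qed.

Lemma algebraic_separation : exists l : E -> R,
  [/\ linear_for *%R l, l d0 = 1 & forall w, W w -> l w <= 1].
Proof.
have [M [PM Mmax]] := Zorn_bigcup dominated_graph_chain.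
have MP : dominated_graph M.
  case: PM => // M0; exfalso; apply: (Mmax line_graph); last by right; exact: dominated_line_graph.
  rewrite M0; split => // /(_ (0 *: d0, 0)); apply; by exists 0.
have total u : exists a, M (u, a).
  apply: contrapT => nM; have [B [BP MB]] := dominated_graph_extend MP nM.
  by apply: (Mmax B MB); right.
have [l Ml] := choice total.
case: MP => fM lM M1 bM; exists l; split.
- by move=> a u v; apply: (fM (a *: u + v)); [exact: Ml | apply: lM; apply: Ml].
- exact: fM (Ml d0) M1.
- by move=> w Ww; apply: bM (Ml w) Ww.
Qed.

End algebraic_separation.

Section locally_convex_space.
Variables (R : realType) (Z : tvsType R).

Lemma scaler_continuous (y : Z) : continuous (fun t : R^o => t *: y).
Proof.
move=> t0.
apply: (@continuous_comp _ _ _ (fun t : R^o => (t, y)) (fun p : R^o * Z => p.1 *: p.2)).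
  exact: (cvg_pair cvg_id (cvg_cst y)).
exact: (@scale_continuous R Z (t0, y)).
Qed.

Lemma affine_continuous (k : R) (p : Z) : continuous (fun u : Z => k *: u + p).
Proof.
move=> x.
apply: (@continuous_comp _ _ _ (fun u : Z => k *: u) (fun u : Z => u + p)).
  apply: (@continuous_comp _ _ _ (fun u : Z => ((k : R^o), u)) (fun q : R^o * Z => q.1 *: q.2)).
    exact: (cvg_pair (cvg_cst (k : R^o)) cvg_id).
  exact: (@scale_continuous R Z (k, x)).
apply: (@continuous_comp _ _ _ (fun u : Z => (u, p)) (fun q : Z * Z => q.1 + q.2)).
  exact: (cvg_pair cvg_id (cvg_cst p)).
exact: (@add_continuous Z (k *: x, p)).
Qed.

Lemma nbhs0_absorbing (S : set Z) : nbhs 0 S -> forall y, exists2 s : R, 0 < s & S (s *: y).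
Proof.
move=> S0 y.
have : nbhs (0 : R^o) [set t : R^o | S (t *: y)].
  by have := @scaler_continuous y 0 S; rewrite /= scale0r; apply.
move/nbhs_ballP => [e /= e0 he]; exists (e / 2); first by rewrite divr_gt0.
apply: he; rewrite /ball /= sub0r normrN ger0_norm ?divr_ge0 ?ltW //.
by rewrite ltr_pdivrMr // ltr_pMr // ltr1n.
Qed.

Lemma nbhs_convex_open (x : Z) (V : set Z) : nbhs x V ->
  exists U : set Z, [/\ convex U, open U, U x & U `<=` V].
Proof.
move=> xV; have [B Bc [Bo Bb]] := @locally_convex R Z.
have [U [BU Ux] UV] := Bb x V xV.
exists U; split => // [u v t Uu Uv t0 t1|]; last exact: Bo.
by have /set_mem := Bc U (mem_set BU) u v (Itv01 t0 t1) (mem_set Uu) (mem_set Uv).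
Qed.

Lemma linear_continuous_bounded (l : Z -> R) (W : set Z) : linear_for *%R l ->
  nbhs 0 W -> (forall w, W w -> l w <= 1) -> continuous l.
Proof.
move=> ll W0 lW x; have [l0 lZ lD lN] := linear_form_basics ll.
apply/(@cvgrPdist_lt _ _ _ (nbhs x) (nbhs_filter x)) => eps eps0.
pose k := 2 / eps.
have sym0 : nbhs (0 : Z) (W `&` [set w | W (- w)]).
  apply: filterI => //.
  have := @affine_continuous (-1) 0 0 W; rewrite /= scaler0 addr0 => /(_ W0) h.
  by apply: (@filterS _ (nbhs (0 : Z)) _ _ _ _ h) => w /=; rewrite scaleN1r addr0.
have := @affine_continuous k (- (k *: x)) x _; rewrite /= subrr => /(_ _ sym0) h.
apply: (@filterS _ (nbhs x) _ _ _ _ h) => u /= [Wu Wnu].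
have := lW _ Wu; have := lW _ Wnu; rewrite lN !lD lN !lZ => h1 h2.
have ke : k * eps = 2 by rewrite /k divfK ?gt_eqF.
rewrite -normrN opprB ltr_norml; apply/andP; split; nra.
Qed.

Lemma closed_convex_separation (K : set Z) (a0 z : Z) :
  closed K -> convex K -> K a0 -> ~ K z ->
  exists l : Z -> R, [/\ linear_for *%R l, continuous l
    & exists2 e, 0 < e & forall a, K a -> l a <= l z - e].
Proof.
move=> Kcl Kcv Ka0 nKz.
have [U [Ucv Uo Uz UK]] :=
  nbhs_convex_open (open_nbhs_nbhs (conj (closed_openC Kcl) nKz)).
pose d0 := z - a0.
(* W = K - U + d0 is a convex neighbourhood of 0 which does not contain d0. *)
pose W := [set w | exists a v, [/\ K a, U v & w + v = a + d0]].
have W0 : nbhs (0 : Z) [set w | U (z - w)].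
  have := @affine_continuous (-1) z 0 U; rewrite /= scaler0 add0r.
  move=> /(_ (open_nbhs_nbhs (conj Uo Uz))) h.
  by apply: (@filterS _ (nbhs (0 : Z)) _ _ _ _ h) => w /=; rewrite scaleN1r addrC.
have nW : nbhs (0 : Z) W.
  apply: (filterS _ W0) => w Uw; exists a0, (z - w); split => //.
  by rewrite /d0 [w + _]addrC subrK [a0 + _]addrC subrK.
have Wcv x y t : W x -> W y -> 0 <= t -> t <= 1 -> W (t *: x + (1 - t) *: y).
  move=> [a1 [v1 [K1 U1 e1]]] [a2 [v2 [K2 U2 e2]]] t0 t1.
  exists (t *: a1 + (1 - t) *: a2), (t *: v1 + (1 - t) *: v2); split.
  - exact: Kcv.
  - exact: Ucv.
  - rewrite addrACA -!scalerDr e1 e2 [t *: (_ + d0)]scalerDr [(1 - t) *: (_ + d0)]scalerDr.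
    rewrite addrACA -scalerDl.
    by rewrite [t + _]addrC subrK scale1r.
have Wd0 : ~ W d0.
  by move=> [a [v [Ka Uv]]]; rewrite addrC => /addIr e; apply: (UK v Uv); rewrite e.
have [l [ll l1 lW]] :=
  algebraic_separation Wcv (nbhs_singleton nW) (nbhs0_absorbing nW) Wd0.
have [l0 lZ lD lN] := linear_form_basics ll.
exists l; split => //; first exact: linear_continuous_bounded nW lW.
have [s s0 Us] := nbhs0_absorbing W0 d0.
exists s => // a Ka.
have Ww : W (a - (z - s *: d0) + d0).
  by exists a, (z - s *: d0); split => //; rewrite addrAC subrK.
have := lW _ Ww; rewrite lD lD lN lD lN lZ l1 mulr1; lra.
Qed.

End locally_convex_space.

Section ediff.
Variable R : realType.
Local Open Scope ereal_scope.

Lemma ediff_le0 (r s : \bar R) : ediff r s <= 0 <-> r <= s.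
Proof.
split; last first.
  move=> rs; apply: ge_ereal_inf; exists 0%:E => //; exists 0%R => //=.
  by case: s rs => //= s'; rewrite /dual_adde /= addr0.
move=> h; rewrite leNgt; apply/negP => sr.
suff [M M0 lbM] : exists2 M : R, (0 < M)%R &
    lbound [set t%:E | t in [set t : R | r <= dual_adde s t%:E]] M%:E.
  by have := le_trans (le_ereal_inf_tmp lbM) h; rewrite lee_fin; lra.
clear h; case: s sr => [s'||] sr.
- case: r sr => [r'||] sr; last by rewrite ltNge leNye in sr.
  + exists (r' - s')%R; first by rewrite subr_gt0 -lte_fin.
    by move=> _ [t /= + <-]; rewrite /dual_adde /= !lee_fin; lra.
  + by exists 1%R => // _ [t /= + <-]; rewrite /dual_adde /= leNgt ltey.
- by rewrite ltNge leey in sr.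
- exists 1%R => // _ [t /= + <-]; rewrite leeNy_eq => /eqP rE.
  by rewrite rE ltxx in sr.
Qed.

Lemma ediff_ge0 (r : \bar R) (s : R) : 0 <= ediff r s%:E <-> s%:E <= r.
Proof.
split; last first.
  move=> sr; apply: le_ereal_inf_tmp => _ [t /= ht <-].
  by have := le_trans sr ht; rewrite !lee_fin; lra.
move=> h; rewrite leNgt; apply/negP => rs.
suff [t t0 ht] : exists2 t : R, (t < 0)%R & r <= (s + t)%:E.
  have : ediff r s%:E <= t%:E by apply: ge_ereal_inf; exists t%:E => //; exists t.
  by move/(le_trans h); rewrite lee_fin; lra.
clear h; case: r rs => [r'||] rs; last by exists (-1)%R; [exact: ltrN10 | exact: leNye].
- by exists (r' - s)%R; [rewrite subr_lt0 -lte_fin | rewrite subrKC].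
- by rewrite ltNge leey in rs.
Qed.

Lemma ediff_ge0_or_Ny (r s : \bar R) : r < +oo ->
  (r = -oo \/ 0 <= ediff s r) <-> r <= s.
Proof.
case: r => [r'| |] // _; last by split=> [_|]; [exact: leNye | left].
by split=> [[//|/ediff_ge0]|/ediff_ge0]; last right.
Qed.

End ediff.

Section set_operations.
Variables (R : realType) (Z : tvsType R).

Lemma co_sub (A : set Z) : A `<=` co A.
Proof. by move=> a Aa B [AB _]; exact: AB. Qed.

Lemma co_min (A B : set Z) : A `<=` B -> convex B -> co A `<=` B.
Proof. by move=> AB cB a; apply. Qed.

Lemma convex_co (A : set Z) : convex (co A).
Proof.
move=> x y t hx hy t0 t1 B [AB cB]; apply: (cB) => //; [apply: hx | apply: hy]; split => //.
Qed.

Lemma convex_closure (K : set Z) : convex K -> convex (closure K).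
Proof.
move=> cK x y t cx cy t0 t1 B; rewrite nbhsE => -[O [Oo Op] OB].
have [u [Ku Ou]] := cx _ (@affine_continuous R Z t ((1 - t) *: y) x O
  (open_nbhs_nbhs (conj Oo Op))).
have Ou' : O ((1 - t) *: y + t *: u) by rewrite addrC.
have [v [Kv Ov]] := cy _ (@affine_continuous R Z (1 - t) (t *: u) y O
  (open_nbhs_nbhs (conj Oo Ou'))).
by exists (t *: u + (1 - t) *: v); split; [exact: cK | apply: OB; rewrite addrC].
Qed.

Lemma mdiff0 (A B : set Z) : mdiff A B 0 <-> B `<=` A.
Proof. by split=> h b /h; rewrite addr0. Qed.

Lemma mdiff_sub_recc (A B : set Z) : B `<=` A -> A !=set0 -> mdiff B A `<=` recc A.
Proof. by move=> BA A0 z hz; split=> // a /hz /BA. Qed.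

Lemma inf_imgE (X : Type) (f : X -> set Z) (x0 : X) :
  closed (f x0) -> convex (f x0) -> f x0 = inf_img f <-> forall x, f x `<=` f x0.
Proof.
have sub_inf x : f x `<=` inf_img f.
  by move=> z fz; apply: subset_closure; apply: co_sub; exists x.
move=> cl cv; split; first by move=> -> x; exact: sub_inf.
move=> h; apply/seteqP; split; first exact: sub_inf.
rewrite [Y in _ `<=` Y](closure_id (f x0)).1 //; apply: closureS.
by apply: (co_min _ cv) => z [x _ fz]; exact: h fz.
Qed.

End set_operations.

Section image_space.
Variables (R : realType) (Z : tvsType R) (C : set Z).

Lemma GG_closed (A : set Z) : GG C A -> closed A.
Proof. by move->; exact: closed_closure. Qed.

Lemma GG_convex (A : set Z) : GG C A -> convex A.
Proof. by move->; apply: convex_closure; exact: convex_co. Qed.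

Lemma GG_addC (A : set Z) a c : GG C A -> A a -> C c -> A (a + c).
Proof.
move=> GA Aa Cc; rewrite GA; apply: subset_closure; apply: co_sub.
by exists a => //; exists c.
Qed.

Lemma linear_le0_on_cone (A : set Z) (a0 : Z) (l : Z -> R) (M : R) :
  GG C A -> convex_cone C -> linear_for *%R l -> A a0 ->
  (forall a, A a -> l a <= M) -> forall c, C c -> l c <= 0.
Proof.
move=> GA [_ [_ cone]] ll Aa0 lM c Cc; rewrite leNgt; apply/negP => lc0.
have [_ lZ lD _] := linear_form_basics ll.
pose t := (`|M - l a0| + 1) / l c.
have t0 : 0 <= t by rewrite divr_ge0 // ?ltW // addr_ge0.
have := lM _ (GG_addC GA Aa0 (cone _ _ t0 Cc)).
rewrite lD lZ /t divfK ?gt_eqF //.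
by have := ler_norm (M - l a0); lra.
Qed.

End image_space.

Section scalarization.
Variables (R : realType) (X : Type) (Z : tvsType R).
Implicit Types (f : X -> set Z) (zs : Z -> R).
Local Open Scope ereal_scope.

Lemma phi_le_subset f zs x x' : f x `<=` f x' -> phi f zs x' <= phi f zs x.
Proof. by move=> h; apply: ereal_inf_le_tmp => _ [z fz <-]; exists z => //; exact: h. Qed.

Lemma phi_lt_pinfty f zs x : f x !=set0 -> phi f zs x < +oo.
Proof.
case=> a fa; apply: (@le_lt_trans _ _ (- zs a)%:E); last exact: ltey.
by apply: ereal_inf_lbound; exists a.
Qed.

Lemma subset_of_phi_le (C : set Z) f x0 x : convex_cone C -> GG C (f x0) -> f x0 !=set0 ->
  (forall zs, neg_polar0 C zs -> phi f zs x0 <= phi f zs x) -> f x `<=` f x0.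
Proof.
move=> cC GA [a0 fa0] hb w fw; apply: contrapT => nw.
have [l [ll lc [e e0 le]]] := closed_convex_separation (GG_closed GA) (GG_convex GA) fa0 nw.
have lC := linear_le0_on_cone GA cC ll fa0 le.
have nz : l <> (fun _ => 0%R) by move=> l0; have := le _ fa0; rewrite l0 /=; lra.
have := hb l (conj (conj (conj ll lc) lC) nz).
have h1 : (- l w + e)%:E <= phi f l x0.
  by apply: le_ereal_inf_tmp => _ [a fa <-]; rewrite lee_fin; have := le a fa; lra.
have h2 : phi f l x <= (- l w)%:E by apply: ereal_inf_lbound; exists w.
by move=> h3; have := le_trans h1 (le_trans h3 h2); rewrite lee_fin; lra.
Qed.

End scalarization.

Local Open Scope ereal_scope.

Theorem mainTheorem18 (R : realType) (X : lmodType R) (Z : tvsType R)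
  (C : set Z) (f : X -> set Z) (x0 : X) :
  hausdorff_space Z ->
  closed C -> convex_cone C ->
  neg_polar0 C !=set0 ->
  (forall x, GG C (f x)) ->
  dom f x0 ->
  let a := f x0 = inf_img f in
  let b := forall x zs, neg_polar0 C zs -> (phi f zs x0 <= phi f zs x)%E in
  let c := forall x zs, neg_polar0 C zs -> (ediff (phi f zs x0) (phi f zs x) <= 0)%E in
  let d := forall x, mdiff (f x0) (f x) (0%R : Z) in
  let e := forall x zs, neg_polar0 C zs ->
             phi f zs x0 = -oo%E \/ (0 <= ediff (phi f zs x) (phi f zs x0))%E in
  let g := forall x, mdiff (f x) (f x0) `<=` recc (f x0) in
  [/\ a <-> b, a <-> c, a <-> d, a <-> e
    & [/\ a -> g, b -> g, c -> g, d -> g & e -> g]].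
Proof.
move=> _ _ cC _ GGf dom_x0 a b c d e g.
have fx0_neq0 : f x0 !=set0 by apply/set0P/eqP.
have AS : a <-> forall x, f x `<=` f x0 := inf_imgE (GG_closed (GGf x0)) (GG_convex (GGf x0)).
have AD : a <-> d by rewrite AS; split=> h x; apply/mdiff0.
have AB : a <-> b.
  rewrite AS; split=> [h x zs _|h x]; first exact/phi_le_subset/h.
  exact: subset_of_phi_le cC (GGf x0) fx0_neq0 (h x).
have BC : b <-> c by split=> h x zs /(h x) /ediff_le0.
have BE : b <-> e.
  have fin zs : phi f zs x0 < +oo := phi_lt_pinfty zs fx0_neq0.
  by split=> h x zs /(h x) /(ediff_ge0_or_Ny _ (fin zs)).
have DG : d -> g.
  by move=> h x; apply: mdiff_sub_recc fx0_neq0; apply/mdiff0.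
split=> //; [exact: iff_trans AB BC | exact: iff_trans AB BE |].
by split=> [/AD|/AB/AD|/BC/AB/AD|//|/BE/AB/AD]; exact: DG.
Qed.
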